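(* Assume the prime-tuple hypothesis. Then there exist infinite sets $A, B$ of positive integers such that $A-B=\{a-b : a\in A,\ b\in B\}$ is exactly the set of all integers $\pm p$ with $p$ a (positive) prime and $p>3$; moreover, every such signed prime $r$ has exactly one representation as $r=a-b$ with $a\in A$, $b\in B$.
   Context: Prime-tuple hypothesis: for any finitely many pairs of integers $a_i, b_i$ with $a_i\neq 0$, there are infinitely many integers $x$ such that all the numbers $a_ix+b_i$ are prime, unless there is a prime $p$ such that for every integer $x$ we have $p \mid a_ix+b_i$ for some $i$. *)

From mathcomp Require Import all_boot all_order all_algebra.
Set Implicit Arguments. Unset Strict Implicit. Unset Printing Implicit Defensive.
Import Order.TTheory GRing.Theory Num.Theory.
Local Open Scope ring_scope.

Definition int_prime (n : int) : bool := prime `|n|%N.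

Definition int_infinite (P : int -> Prop) : Prop :=
  forall N : nat, exists x : int, (N < `|x|)%N /\ P x.

Definition prime_tuple_hypothesis : Prop :=
  forall s : seq (int * int),
    all (fun ab => ab.1 != 0) s ->
    ~ (exists p : nat, prime p /\
         forall x : int, has (fun ab => (p%:Z %| ab.1 * x + ab.2)%Z) s) ->
    int_infinite (fun x => all (fun ab => int_prime (ab.1 * x + ab.2)) s).

Definition signed_prime_gt3 (r : int) : bool :=
  prime `|r|%N && (3 < `|r|)%N.

(* A and B are the unions of an increasing chain of finite lists.  Each stage
   is admissible: every difference a - b is a signed prime > 3 with a unique
   representation, A consists of multiples of 6, B of numbers prime to 6, and
   for every prime q >= 5 there is a certificate mod q.  To represent a new
   signed prime r by a pair (a, a - r), the certificate yields, for each prime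
   q below a bound, a residue class for a such that q divides none of the new
   differences a - y (y in B) and x - (a - r) (x in A), or, when r = +-q, a
   reserved empty class for both a and a - r; and the certificate survives the
   extension.  The Chinese remainder theorem combines these classes into
   a = c0 mod M, and the prime-tuple hypothesis applied to the forms
   M t + c0 - y and M t + c0 - r - x makes all new differences prime.  Above
   the bound the extended lists still leave a long run of free residues, which
   gives a certificate directly.  Enumerating the integers, every signed prime
   is eventually represented. *)

From mathcomp Require Import all_boot all_order all_algebra.
From mathcomp Require Import zify ring.
From Stdlib Require Import IndefiniteDescription.

Set Implicit Arguments.
Unset Strict Implicit.
Unset Printing Implicit Defensive.
Import Order.TTheory GRing.Theory Num.Theory.
Local Open Scope ring_scope.

Definition resz (q : nat) (z : int) : nat := `|(z %% q%:Z)%Z|%N.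

Lemma resz_nat q (n : nat) : resz q n = (n %% q)%N.
Proof. by rewrite /resz modz_nat absz_nat. Qed.

Lemma resz_ltn q z : (0 < q)%N -> (resz q z < q)%N.
Proof.
move=> q_gt0; have q_neq0 : q%:Z != 0 by rewrite eqz_nat -lt0n.
have := modz_ge0 z q_neq0; have := ltz_pmod z (q_gt0 : 0 < q%:Z).
rewrite /resz; lia.
Qed.

Lemma eq_resz q z w : (0 < q)%N -> (resz q z == resz q w) = (q%:Z %| z - w)%Z.
Proof.
move=> q_gt0; have q_neq0 : q%:Z != 0 by rewrite eqz_nat -lt0n.
rewrite -eqz_mod_dvd /resz.
by have := modz_ge0 z q_neq0; have := modz_ge0 w q_neq0; lia.
Qed.

Lemma resz_subn q (c : nat) r : (c < q)%N ->
  resz q (c%:Z - r) = ((c + q - resz q r) %% q)%N.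
Proof.
move=> c_lt_q; have q_gt0 : (0 < q)%N by lia.
apply/eqP; rewrite -resz_nat eq_resz //.
have r_lt_q := resz_ltn r q_gt0.
have := eq_resz r (resz q r)%:Z q_gt0.
rewrite resz_nat modn_small // eqxx => /esym r_mod.
have -> : ((c + q - resz q r)%N)%:Z = c%:Z + q%:Z - (resz q r)%:Z by lia.
have -> : c%:Z - r - (c%:Z + q%:Z - (resz q r)%:Z) = - (r - (resz q r)%:Z) - q%:Z by ring.
by rewrite rpredB ?rpredN ?dvdzz.
Qed.

Lemma resz_modn q (n : nat) z :
  (0 < q)%N -> resz q ((n %% q)%N%:Z + z) = resz q (n%:Z + z).
Proof.
move=> q_gt0; apply/eqP; rewrite eq_resz //.
have -> : (n %% q)%N%:Z + z - (n%:Z + z) = - ((n %/ q)%N%:Z * q%:Z).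
  by have := divn_eq n q; lia.
by rewrite rpredN dvdz_mull.
Qed.

Lemma resz_sub_class q (a b : nat) r :
  (0 < q)%N -> a%:Z - b%:Z = r -> (b %% q)%N = resz q ((a %% q)%N%:Z - r).
Proof.
move=> q_gt0 ab_r; apply/eqP; rewrite -resz_nat eq_resz //.
have -> : b%:Z - ((a %% q)%N%:Z - r) = (a %/ q)%N%:Z * q%:Z.
  by rewrite -ab_r; have := divn_eq a q; lia.
exact: dvdz_mull.
Qed.

Lemma signed_prime_dvd q r :
  prime q -> signed_prime_gt3 r -> (q%:Z %| r)%Z -> r = q%:Z \/ r = - q%:Z.
Proof.
by move=> q_prime /andP[r_prime _]; rewrite dvdzE absz_nat dvdn_prime2 // => /eqP; lia.
Qed.

Lemma signed_prime_gt3_coprime6 r :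
  signed_prime_gt3 r -> ~~ (2 %| absz r)%N && ~~ (3 %| absz r)%N.
Proof. by case/andP=> r_prime r_gt3; rewrite !dvdn_prime2 //; lia. Qed.

Definition represented (A B : seq nat) (r : int) : bool :=
  has (fun a => has (fun b => a%:Z - b%:Z == r) B) A.

Lemma representedP A B r :
  reflect (exists2 a, a \in A & exists2 b, b \in B & a%:Z - b%:Z = r)
          (represented A B r).
Proof.
apply: (iffP hasP) => [[a aA /hasP[b bB /eqP]]|[a aA [b bB ab_r]]].
  by exists a => //; exists b.
by exists a => //; apply/hasP; exists b => //; apply/eqP.
Qed.

Lemma represented_cons A B a b r :
  represented A B r -> represented (a :: A) (b :: B) r.
Proof.
case/representedP=> a' aA [b' bB ab_r]; apply/representedP.
by exists a'; rewrite ?inE ?aA ?orbT //; exists b'; rewrite ?inE ?bB ?orbT.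
Qed.

Lemma represented_head A B a b : represented (a :: A) (b :: B) (a%:Z - b%:Z).
Proof.
by apply/representedP; exists a; rewrite ?mem_head //; exists b; rewrite ?mem_head.
Qed.

Section Certificate.

Variables (q : nat) (A B : seq nat) (U V : pred nat).

Definition empty_class (rho : nat) : bool :=
  all (fun x => (x %% q)%N != rho) (A ++ B).

Definition reserved (rho : nat) : bool :=
  [&& (rho < q)%N, ~~ U rho, ~~ V rho & empty_class rho].

(* A new pair (a, b) with a - b = r, where q does not divide r, goes into
   classes a = c in U and b = c - r in V (in nat, c - R mod q is written
   (c + q - R) %% q); as A avoids V and B avoids U, q then divides none of the
   new differences.  The classes rp and rm are kept empty for the
   representations of q and -q. *)
Definition certifies (rp rm : nat) : Prop :=
  [/\ forall c, U c -> ~~ V c,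
      forall R, (0 < R < q)%N -> exists2 c, (c < q)%N & U c && V ((c + q - R) %% q)%N,
      {in A, forall a, ~~ V (a %% q)%N},
      {in B, forall b, ~~ U (b %% q)%N} &
      [/\ represented A B q%:Z || reserved rp,
          represented A B (- q%:Z) || reserved rm &
          [|| represented A B q%:Z, represented A B (- q%:Z) | rp != rm]]].

End Certificate.

Definition certificate (q : nat) (A B : seq nat) : Prop :=
  exists (U V : pred nat) (rp rm : nat), certifies q A B U V rp rm.

Lemma pigeonhole_avoid (T1 T2 : eqType) (l : seq T1) (f : T1 -> T2) (S : seq T2) :
  uniq l -> {in l &, injective f} -> (size S < size l)%N ->
  exists2 x, x \in l & f x \notin S.
Proof.
move=> l_uniq f_inj; rewrite ltnNge => S_small.
suff /hasP[x xl fx] : has (fun x => f x \notin S) l by exists x.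
move: S_small; apply: contraNT; rewrite -all_predC => /allP all_in.
rewrite -(size_map f) uniq_leq_size ?map_inj_in_uniq //.
by move=> _ /mapP[x xl ->]; have := all_in x xl; rewrite /= negbK.
Qed.

Section GapCertificate.

Variables (q t m : nat) (A B : seq nat).
Hypotheses (t_gt0 : (0 < t)%N) (m_large : (size A + 3 <= m)%N) (q_large : (t + m + 2 < q)%N).
Hypothesis gap : {in A ++ B, forall x, (x %% q < t.-1)%N || (t + m + 2 < x %% q)%N}.

Let window (c : nat) : bool := (t <= c < t + m)%N.
Let resA : seq nat := [seq (a %% q)%N | a <- A].
Let resB : seq nat := [seq (b %% q)%N | b <- B].
Let taken : seq nat := [:: t + m + 1, t + m + 2 & resA]%N.
Let U (c : nat) : bool := window c || (c \in resA) && (c \notin resB).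
Let V (c : nat) : bool := [&& (c < q)%N, ~~ window c & c \notin taken].

Let outside_gap y : (t.-1 <= y <= t + m + 2)%N -> empty_class q A B y.
Proof.
move=> y_gap; apply/allP => x /gap; apply: contraL => /eqP->; lia.
Qed.

Let not_resA y : (t.-1 <= y <= t + m + 2)%N -> y \notin resA.
Proof.
move=> /outside_gap /allP y_empty; apply/mapP => -[a aA ya].
by have := y_empty a; rewrite mem_cat aA ya eqxx => /(_ isT).
Qed.

Let V_free y : (y < q)%N -> ~~ window y -> (t.-1 <= y <= t + m)%N -> V y.
Proof.
move=> y_lt_q y_win y_gap; have y_notA : y \notin resA by apply: not_resA; lia.
by rewrite /V /taken y_lt_q y_win !inE (negbTE y_notA) orbF; lia.
Qed.

Let gap_cover R : (0 < R < q)%N -> exists2 c, (c < q)%N & U c && V ((c + q - R) %% q)%N.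
Proof.
move=> R_range.
have win_U c : window c -> U c by rewrite /U => ->.
case: (ltnP R m) => [R_small | R_ge_m].
  exists (t + R - 1)%N; first lia.
  rewrite win_U /window; last lia.
  have -> : (t + R - 1 + q - R = t.-1 + q)%N by lia.
  by rewrite modnDr modn_small; [apply: V_free; rewrite /window|]; lia.
case: (ltnP (q - R) m) => [R_large | R_mid].
  exists (t + m - (q - R))%N; first lia.
  rewrite win_U /window; last lia.
  have -> : (t + m - (q - R) + q - R = t + m)%N by lia.
  by rewrite modn_small; [apply: V_free; rewrite /window|]; lia.
have shift_inj : {in iota t m &, injective (fun c => (c + q - R) %% q)%N}.
  move=> c1 c2; rewrite !mem_iota => c1_win c2_win /eqP.
  have -> : (c1 + q - R = c1 + (q - R))%N by lia.
  have -> : (c2 + q - R = c2 + (q - R))%N by lia.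
  by rewrite eqn_modDr !modn_small; [move/eqP| lia | lia].
have [|c c_win c_free] := pigeonhole_avoid (S := taken) (iota_uniq t m) shift_inj.
  by rewrite size_iota /taken /= size_map; lia.
move: c_win; rewrite mem_iota => c_win.
exists c; first lia.
rewrite win_U /window; last lia.
rewrite /V c_free ltn_pmod /=; last lia.
case: (ltnP (c + q - R) q) => wrap; first by rewrite modn_small /window; lia.
have -> : (c + q - R = (c - R) + q)%N by lia.
by rewrite modnDr modn_small /window; lia.
Qed.

Lemma certificate_of_gap : certificate q A B.
Proof.
have reserved_gap y : (t + m < y <= t + m + 2)%N -> y \in taken -> reserved q A B U V y.
  move=> y_range y_taken; have y_notA : y \notin resA by apply: not_resA; lia.
  by rewrite /reserved /U /V y_taken outside_gap ?(negbTE y_notA) /window; lia.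
exists U, V, (t + m + 1)%N, (t + m + 2)%N; split.
- move=> c /orP[c_win | /andP[c_resA _]]; rewrite /V /taken ?c_win ?andbF //.
  by rewrite !inE c_resA !orbT !andbF.
- exact: gap_cover.
- by move=> a aA; rewrite /V /taken !inE (map_f (fun a => a %% q)%N) ?orbT ?andbF.
- move=> b bB; rewrite /U (map_f (fun b => b %% q)%N bB) andbF orbF /window.
  have : b \in A ++ B by rewrite mem_cat bB orbT.
  by move/gap; lia.
- have rp_reserved : reserved q A B U V (t + m + 1)%N.
    by apply: reserved_gap; rewrite ?inE ?eqxx; lia.
  have rm_reserved : reserved q A B U V (t + m + 2)%N.
    by apply: reserved_gap; rewrite ?inE ?eqxx ?orbT; lia.
  have rp_neq_rm : (t + m + 1 != t + m + 2)%N by lia.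
  by rewrite rp_reserved rm_reserved rp_neq_rm !orbT.
Qed.

End GapCertificate.

(* Split [0, q) into k + 1 blocks of length k + 7; one of them contains no
   residue of the k elements of A ++ B and serves as the gap. *)
Lemma certificate_large q A B :
  ((size (A ++ B)).+1 * (size (A ++ B) + 7) <= q)%N -> certificate q A B.
Proof.
set k := size (A ++ B); set L := (k + 7)%N => q_large.
have L_gt0 : (0 < L)%N by lia.
have [|j j_small j_free] :=
  pigeonhole_avoid (f := id) (S := [seq (x %% q) %/ L | x <- A ++ B]%N)
    (iota_uniq 0 k.+1) (in2W (@inj_id nat)).
  by rewrite size_map size_iota.
rewrite mem_iota add0n in j_small.
have jL_small : (j.+1 * L <= q)%N by apply: leq_trans q_large; rewrite leq_mul2r; lia.
apply: (@certificate_of_gap q (j * L + 1) (k + 3)).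
- lia.
- by rewrite /k size_cat; lia.
- by move: jL_small; rewrite mulSn /L; lia.
move=> x xAB; have : ((x %% q) %/ L)%N != j.
  by apply: contraNneq j_free => <-; rewrite (map_f (fun x => (x %% q) %/ L)%N).
by rewrite neq_ltn ltn_divLR // leq_divRL // mulSn /L; lia.
Qed.

Lemma reserved_cons q A B (U V : pred nat) a b rho :
  reserved q A B U V rho -> (a %% q)%N != rho -> (b %% q)%N != rho ->
  reserved q (a :: A) (b :: B) U V rho.
Proof.
rewrite /reserved /empty_class /= !all_cat /= => /and4P[-> -> -> /andP[-> ->]] -> ->.
by rewrite !andbT.
Qed.

Lemma certifies_cons q A B (U V : pred nat) rp rm a b :
  certifies q A B U V rp rm -> ~~ V (a %% q)%N -> ~~ U (b %% q)%N ->
  represented (a :: A) (b :: B) q%:Z || ((a %% q)%N != rp) && ((b %% q)%N != rp) ->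
  represented (a :: A) (b :: B) (- q%:Z) || ((a %% q)%N != rm) && ((b %% q)%N != rm) ->
  certifies q (a :: A) (b :: B) U V rp rm.
Proof.
case=> disj cover A_out B_out [rp_ok rm_ok rp_rm] Va Ub rp_new rm_new.
have keep d rho : represented A B d || reserved q A B U V rho ->
    represented (a :: A) (b :: B) d || ((a %% q)%N != rho) && ((b %% q)%N != rho) ->
    represented (a :: A) (b :: B) d || reserved q (a :: A) (b :: B) U V rho.
  case/orP=> [/(represented_cons a b) -> // | rho_res].
  by case/orP=> [-> // | /andP[a_rho b_rho]]; rewrite reserved_cons ?orbT.
split => //.
- by move=> x; rewrite inE => /predU1P[-> // | /A_out].
- by move=> x; rewrite inE => /predU1P[-> // | /B_out].
split; [exact: keep | exact: keep |].
by case/or3P: rp_rm => [/(represented_cons a b) | /(represented_cons a b) | ] ->;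
  rewrite ?orbT.
Qed.

Definition extension_class q A B r c : Prop :=
  [/\ {in B, forall x, (x %% q)%N != c},
      {in A, forall x, (x %% q)%N != resz q (c%:Z - r)} &
      forall a b : nat, (a %% q)%N = c -> a%:Z - b%:Z = r ->
        certificate q (a :: A) (b :: B)].

Lemma extension_class_coprime q A B r :
  (0 < q)%N -> certificate q A B -> ~~ (q%:Z %| r)%Z ->
  exists2 c, (c < q)%N & extension_class q A B r c.
Proof.
move=> q_gt0 [U [V [rp [rm cert]]]] q_r.
have [disj cover A_out B_out [rp_ok rm_ok _]] := cert.
have R_range : (0 < resz q r < q)%N.
  rewrite resz_ltn // andbT lt0n; apply: contra q_r => /eqP r0.
  by rewrite -(subr0 r) -eq_resz // r0 (resz_nat q 0) mod0n.
have [c c_lt /andP[Uc]] := cover _ R_range; rewrite -resz_subn // => Vcr.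
exists c => //; split.
- by move=> x /B_out; apply: contraNneq => ->.
- by move=> x /A_out; apply: contraNneq => ->.
move=> a b a_c ab_r; exists U, V, rp, rm.
have := resz_sub_class q_gt0 ab_r; rewrite a_c => b_class.
have away d rho : represented A B d || reserved q A B U V rho ->
    represented (a :: A) (b :: B) d || ((a %% q)%N != rho) && ((b %% q)%N != rho).
  case/orP=> [/(represented_cons a b) -> // | /and4P[_ U_rho V_rho _]].
  by rewrite a_c b_class; apply/orP; right; apply/andP; split;
    [apply: contraNneq U_rho => <- | apply: contraNneq V_rho => <-].
apply: certifies_cons; rewrite ?away //.
  by rewrite a_c; apply: disj.
by rewrite b_class; apply: contraL Vcr; apply: disj.
Qed.

Lemma extension_class_reserved q A B r :
  (0 < q)%N -> certificate q A B -> r = q%:Z \/ r = - q%:Z -> ~~ represented A B r ->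
  exists2 c, (c < q)%N & extension_class q A B r c.
Proof.
move=> q_gt0 [U [V [rp [rm cert]]]] r_q r_new.
have [_ _ _ _ [rp_ok rm_ok rp_rm]] := cert.
have r_class c : (c < q)%N -> resz q (c%:Z - r) = c.
  move=> c_lt; apply/eqP; rewrite -{2}(modn_small c_lt) -resz_nat eq_resz //.
  by rewrite addrAC subrr add0r rpredN; case: r_q => ->; rewrite ?rpredN dvdzz.
have finish c : reserved q A B U V c ->
    [|| r == q%:Z, represented A B q%:Z | c != rp] ->
    [|| r == - q%:Z, represented A B (- q%:Z) | c != rm] ->
    exists2 c, (c < q)%N & extension_class q A B r c.
  case/and4P=> c_lt U_c V_c /allP c_empty rp_new rm_new; exists c => //; split.
  - by move=> x xB; apply: c_empty; rewrite mem_cat xB orbT.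
  - by move=> x xA; rewrite r_class //; apply: c_empty; rewrite mem_cat xA.
  move=> a b a_c ab_r; exists U, V, rp, rm.
  have b_c : (b %% q)%N = c by rewrite (resz_sub_class q_gt0 ab_r) a_c r_class.
  have new_r : represented (a :: A) (b :: B) r by rewrite -ab_r represented_head.
  apply: certifies_cons; rewrite ?a_c ?b_c //.
    by case/or3P: rp_new => [/eqP <- | /(represented_cons a b) -> | ->]; rewrite ?new_r ?orbT.
  by case/or3P: rm_new => [/eqP <- | /(represented_cons a b) -> | ->]; rewrite ?new_r ?orbT.
case: r_q => r_def; rewrite r_def in r_new; move: rp_rm; rewrite (negbTE r_new) /=.
  move: rp_ok; rewrite (negbTE r_new) /= => rp_res rp_rm.
  apply: finish rp_res _ _; rewrite r_def ?eqxx //.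
  by case/orP: rp_rm => ->; rewrite ?orbT.
move: rm_ok; rewrite (negbTE r_new) /= => rm_res; move=> rp_rm.
apply: finish rm_res _ _; rewrite r_def ?eqxx //.
by case/orP: rp_rm => [-> | ]; rewrite ?orbT // eq_sym => ->; rewrite !orbT.
Qed.

Lemma extension_class_exists q A B r :
  prime q -> certificate q A B -> signed_prime_gt3 r -> ~~ represented A B r ->
  exists2 c, (c < q)%N & extension_class q A B r c.
Proof.
move=> q_prime cert r_prime r_new; have q_gt0 := prime_gt0 q_prime.
have [q_r | q_r] := boolP (q%:Z %| r)%Z; last exact: extension_class_coprime.
exact: extension_class_reserved (signed_prime_dvd q_prime r_prime q_r) r_new.
Qed.

Lemma chinese_seq (P : nat -> nat -> Prop) (m : nat) (s : seq nat) :
  uniq s -> all prime s -> {in s, forall q, ~~ (q %| m)%N} ->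
  {in s, forall q, exists2 c, (c < q)%N & P q c} ->
  exists2 c0, (m %| c0)%N & {in s, forall q, P q (c0 %% q)%N}.
Proof.
elim: s => [|q s IHs] /=; first by exists 0%N.
case/andP=> q_s s_uniq /andP[q_prime s_prime] s_coprime s_sol.
have [c0 m_c0 c0_sol] : exists2 c0, (m %| c0)%N & {in s, forall p, P p (c0 %% p)%N}.
  by apply: IHs => // p p_s; [apply: s_coprime | apply: s_sol]; rewrite inE p_s orbT.
have [c c_lt c_sol] := s_sol q (mem_head q s).
set M := (m * \prod_(p <- s) p)%N.
have M_q : coprime M q.
  rewrite coprime_sym prime_coprime // Euclid_dvdM // negb_or s_coprime ?mem_head //=.
  rewrite Euclid_dvd_prod // big_has; apply/hasP=> -[p p_s].
  rewrite dvdn_prime2 //; last exact: (allP s_prime).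
  by move/eqP=> qp; rewrite qp p_s in q_s.
have chinese_mod d : (d %| M)%N -> (chinese M q c0 c = c0 %[mod d])%N.
  by move=> d_M; rewrite -(modn_dvdm _ d_M) chinese_modl // modn_dvdm.
exists (chinese M q c0 c).
  by rewrite /dvdn chinese_mod ?dvdn_mulr // -/(dvdn _ _) m_c0.
move=> p; rewrite inE => /predU1P[-> | p_s].
  by rewrite chinese_modr // modn_small.
rewrite chinese_mod; first exact: c0_sol.
by rewrite /M dvdn_mull // (big_rem p) //= dvdn_mulr.
Qed.

(* Each linear form M x + e with p not dividing M vanishes mod p at exactly one
   residue, so fewer than p forms cannot cover all of [0, p). *)
Lemma exists_uncovered p (M : int) (s : seq int) :
  prime p -> ~~ (p%:Z %| M)%Z -> (size s < p)%N ->
  exists2 x : nat, (x < p)%N & ~~ has (fun e => (p%:Z %| M * x%:Z + e)%Z) s.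
Proof.
move=> p_prime p_M s_small.
pose covers x e := (p%:Z %| M * x%:Z + e)%Z.
suff /hasP[x] : has (fun x => ~~ has (covers x) s) (iota 0 p).
  by rewrite mem_iota => x_lt; exists x.
apply/contraT; rewrite -all_predC => /allP /= covered.
have cover_x x : x \in iota 0 p -> has (covers x) s by move/covered/negbNE.
pose f x := find (covers x) s.
have f_inj : {in iota 0 p &, injective f}.
  move=> x y x_lt y_lt fxy; have := nth_find 0 (cover_x x x_lt).
  have := nth_find 0 (cover_x y y_lt); rewrite -/(f x) -/(f y) -fxy /covers.
  move: x_lt y_lt; rewrite !mem_iota => x_lt y_lt p_y p_x.
  have : (p%:Z %| M * (x%:Z - y%:Z))%Z.
    set e := nth 0 s (f x) in p_x p_y.
    by rewrite (_ : M * _ = M * x%:Z + e - (M * y%:Z + e)) ?rpredB //; ring.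
  rewrite dvdzE abszM Euclid_dvdM // -dvdzE (negbTE p_M) /=.
  have [-> // | xy_neq] := eqVneq x y.
  by move/dvdn_leq; lia.
have [|x x_lt] := pigeonhole_avoid (S := iota 0 (size s)) (iota_uniq 0 p) f_inj.
  by rewrite !size_iota.
by rewrite mem_iota /f -has_find cover_x.
Qed.

Lemma prime_tuple_shifts (M : nat) (es : seq int) :
  prime_tuple_hypothesis -> (0 < M)%N ->
  (forall p, prime p -> (p %| M)%N -> {in es, forall e, ~~ (p%:Z %| e)%Z}) ->
  (forall p, prime p -> ~~ (p %| M)%N -> (2 * size es < p)%N) ->
  forall N, exists2 y : nat, (N < y)%N & {in es, forall e, prime (absz (M%:Z * y%:Z + e))}.
Proof.
move=> pth M_gt0 small_p large_p N.
pose es2 := es ++ map -%R es.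
have es2_small p : prime p -> (p %| M)%N -> {in es2, forall e, ~~ (p%:Z %| e)%Z}.
  move=> p_prime p_M e; rewrite mem_cat => /orP[/small_p-> // | /mapP[e' e'_es ->]].
  by rewrite rpredN small_p.
pose s := [seq (M%:Z, e) | e <- es2].
have s_nz : all (fun ab : int * int => ab.1 != 0) s.
  by apply/allP=> _ /mapP[e _ ->]; rewrite /= eqz_nat -lt0n.
have s_no_cover : ~ exists p, prime p /\
    forall x, has (fun ab : int * int => (p%:Z %| ab.1 * x + ab.2)%Z) s.
  move=> [p [p_prime p_covers]].
  have [p_M | p_M] := boolP (p %| M)%N.
    have /hasP[_ /mapP[e e_es2 ->]] := p_covers 0; rewrite /= mulr0 add0r.
    by apply/negP; apply: es2_small.
  have p_M' : ~~ (p%:Z %| M%:Z)%Z by rewrite dvdzE !absz_nat.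
  have es2_lt : (size es2 < p)%N by rewrite size_cat size_map addnn -mul2n large_p.
  have [x _] := exists_uncovered p_prime p_M' es2_lt.
  by have := p_covers x; rewrite has_map => ->.
have [x [x_big x_prime]] := pth s s_nz s_no_cover N.
exists `|x|%N => // e e_es.
move: x_prime; rewrite all_map => /allP s_prime.
have [x_ge0 | x_lt0] := boolP (0 <= x).
  have := s_prime e; rewrite mem_cat e_es /int_prime /= => /(_ isT).
  by rewrite gez0_abs.
have := s_prime (- e); rewrite mem_cat map_f ?orbT // /int_prime /= => /(_ isT).
by rewrite ltz0_abs ?ltNge // mulrN -abszN opprD opprK.
Qed.

Definition unique_differences (A B : seq nat) : Prop :=
  forall a1 b1 a2 b2, a1 \in A -> b1 \in B -> a2 \in A -> b2 \in B ->
    a1%:Z - b1%:Z = a2%:Z - b2%:Z -> a1 = a2 /\ b1 = b2.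

(* Old differences lie in [-m, m], the new ones a - y above m and x - b
   below -m, so a collision can only happen inside one family. *)
Lemma unique_differences_cons A B a b r m :
  unique_differences A B -> ~~ represented A B r -> a%:Z - b%:Z = r ->
  {in A ++ B, forall x, (x <= m)%N} -> (2 * m + absz r < a)%N ->
  unique_differences (a :: A) (b :: B).
Proof.
move=> AB_uniq r_new ab_r bound a_big.
have bA x : x \in A -> (x <= m)%N by move=> xA; apply: bound; rewrite mem_cat xA.
have bB x : x \in B -> (x <= m)%N by move=> xB; apply: bound; rewrite mem_cat xB orbT.
have not_r x y : x \in A -> y \in B -> x%:Z - y%:Z != r.
  move=> xA yB; apply: contraNneq r_new => xy_r.
  by apply/representedP; exists x => //; exists y.
move=> a1 b1 a2 b2; rewrite !inE.
case/predU1P=> [-> | a1A]; case/predU1P=> [-> | b1B];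
  case/predU1P=> [-> | a2A]; case/predU1P=> [-> | b2B] diff_eq.
all: try by [].
all: try by apply: AB_uniq.
all: try by case/eqP: (not_r _ _ a2A b2B); rewrite -diff_eq.
all: try by case/eqP: (not_r _ _ a1A b1B); rewrite diff_eq.
all: repeat match goal with
  H : is_true (_ \in _) |- _ => first [move/bA: H => H | move/bB: H => H]
  end.
all: lia.
Qed.

Definition admissible (A B : seq nat) : Prop :=
  [/\ {in A & B, forall a b, signed_prime_gt3 (a%:Z - b%:Z)},
      unique_differences A B,
      {in A, forall a, (0 < a)%N && (6 %| a)%N},
      {in B, forall b, [&& (0 < b)%N, ~~ (2 %| b)%N & ~~ (3 %| b)%N]} &
      forall q, prime q -> (5 <= q)%N -> certificate q A B].

Lemma admissible_cons A B a b r :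
  admissible A B -> signed_prime_gt3 r -> ~~ represented A B r -> a%:Z - b%:Z = r ->
  (2 * \max_(x <- A ++ B) x + absz r + 3 < a)%N -> (6 %| a)%N ->
  {in B, forall x, prime (absz (a%:Z - x%:Z))} ->
  {in A, forall x, prime (absz (x%:Z - b%:Z))} ->
  (forall q, prime q -> (5 <= q)%N -> certificate q (a :: A) (b :: B)) ->
  admissible (a :: A) (b :: B).
Proof.
case=> diff_prime AB_uniq A_pos B_pos _ r_prime r_new ab_r a_big a6 aB_prime Ab_prime certs.
set m := \max_(x <- A ++ B) x in a_big.
have bound : {in A ++ B, forall x, (x <= m)%N} by move=> x xAB; exact: leq_bigmax_seq.
have /andP[r2 r3] := signed_prime_gt3_coprime6 r_prime.
split => //.
- move=> x y; rewrite !inE => /predU1P[-> | xA] /predU1P[-> | yB].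
  + by rewrite ab_r.
  + have := bound y; rewrite mem_cat yB orbT => /(_ isT) y_le.
    by rewrite /signed_prime_gt3 aB_prime //=; lia.
  + have := bound x; rewrite mem_cat xA => /(_ isT) x_le.
    by rewrite /signed_prime_gt3 Ab_prime //=; lia.
  + exact: diff_prime.
- by apply: unique_differences_cons AB_uniq r_new ab_r bound _; lia.
- by move=> x; rewrite inE => /predU1P[-> | /A_pos //]; rewrite a6 andbT; lia.
- by move=> x; rewrite inE => /predU1P[-> | /B_pos //]; lia.
Qed.

Section Extension.

Hypothesis pth : prime_tuple_hypothesis.
Variables (A B : seq nat) (r : int).
Hypotheses (AB_adm : admissible A B) (r_prime : signed_prime_gt3 r).
Hypothesis r_new : ~~ represented A B r.

(* Primes q >= (k + 3) (k + 9) exceed twice the number of new differences,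
   and the lists extended by one pair still satisfy [certificate_large]. *)
Let k := size (A ++ B).
Let P := [seq q <- iota 5 ((k + 3) * (k + 9)) | prime q].
Let M := (6 * \prod_(q <- P) q)%N.

Let P_prime : all prime P. Proof. exact: filter_all. Qed.

Let M_gt0 : (0 < M)%N.
Proof. by rewrite muln_gt0 /= big_seq prodn_cond_gt0 // => q /(allP P_prime) /prime_gt0. Qed.

Let P_dvd_M q : q \in P -> (q %| M)%N.
Proof. by move=> q_P; rewrite dvdn_mull // (big_rem q) //= dvdn_mulr. Qed.

Let P_ge5 q : q \in P -> (5 <= q)%N.
Proof. by rewrite mem_filter mem_iota => /and3P[]. Qed.

Let large_notin_P q : prime q -> (5 <= q)%N -> q \notin P -> ((k + 3) * (k + 9) <= q)%N.
Proof. by move=> q_prime q_ge5; rewrite mem_filter mem_iota q_prime q_ge5 /=; lia. Qed.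

Let dvd_M p : prime p -> (p %| M)%N -> [\/ p = 2%N, p = 3%N | p \in P].
Proof.
move=> p_prime; rewrite Euclid_dvdM // (Euclid_dvdM 2 3) //.
rewrite (@dvdn_prime2 p 2) // (@dvdn_prime2 p 3) //.
case/orP=> [/orP[/eqP-> | /eqP->] | ]; [by constructor 1 | by constructor 2 |].
rewrite Euclid_dvd_prod // big_has => /hasP[q q_P].
by rewrite (dvdn_prime2 p_prime (allP P_prime q q_P)) => /eqP->; constructor 3.
Qed.

Let small_residues :
  exists2 c0, (6 %| c0)%N & {in P, forall q, extension_class q A B r (c0 %% q)%N}.
Proof.
have [_ _ _ _ certs] := AB_adm.
apply: (chinese_seq (P := fun q c => extension_class q A B r c));
  rewrite ?filter_uniq ?iota_uniq //.
  move=> q q_P; have q_prime := allP P_prime q q_P.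
  by rewrite (Euclid_dvdM 2 3) // !(dvdn_prime2 q_prime) //; have := P_ge5 q_P; lia.
move=> q q_P; have q_prime := allP P_prime q q_P.
by apply: extension_class_exists => //; apply: certs; rewrite ?P_ge5.
Qed.

Let shift_terms (c0 : nat) : seq int :=
  [seq c0%:Z - x%:Z | x <- B] ++ [seq c0%:Z - r - x%:Z | x <- A].

Let prime_shifts c0 : (6 %| c0)%N -> {in P, forall q, extension_class q A B r (c0 %% q)%N} ->
  forall N, exists2 y : nat, (N < y)%N &
    {in shift_terms c0, forall e, prime (absz (M%:Z * y%:Z + e))}.
Proof.
move=> c0_6 c0_P; have [_ _ A_pos B_pos _] := AB_adm.
have /andP[r2 r3] := signed_prime_gt3_coprime6 r_prime.
apply: prime_tuple_shifts => //.
- move=> p p_prime /(dvd_M p_prime)[-> | -> | p_P] e;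
    rewrite mem_cat => /orP[] /mapP[x x_AB ->].
  + by have := B_pos x x_AB; lia.
  + by have := A_pos x x_AB; lia.
  + by have := B_pos x x_AB; lia.
  + by have := A_pos x x_AB; lia.
  + have [x_c0 _ _] := c0_P p p_P; have p_gt0 := prime_gt0 p_prime.
    by rewrite -eq_resz // !resz_nat eq_sym x_c0.
  + have [_ x_c0r _] := c0_P p p_P; have p_gt0 := prime_gt0 p_prime.
    by rewrite -eq_resz // resz_nat -resz_modn // eq_sym x_c0r.
- move=> p p_prime p_M.
  have p_ge5 : (5 <= p)%N.
    move: p_M; apply: contraR; rewrite -ltnNge => p_lt5; rewrite /M dvdn_mulr //.
    by case: p p_prime p_lt5 => [|[|[|[|[]]]]].
  have /large_notin_P : p \notin P by apply: contra p_M; apply: P_dvd_M.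
  by rewrite size_cat !size_map /k size_cat => /(_ p_prime p_ge5); lia.
Qed.

Lemma admissible_extend N :
  exists a b : nat, [/\ (N < a)%N, (N < b)%N, a%:Z - b%:Z = r & admissible (a :: A) (b :: B)].
Proof.
have [c0 c0_6 c0_P] := small_residues.
set m := \max_(x <- A ++ B) x.
have [y y_big y_prime] := prime_shifts c0_6 c0_P (N + 2 * m + absz r + 3).
set a := (M * y + c0)%N.
have y_le_a : (y <= a)%N by rewrite /a; nia.
set b := absz (a%:Z - r).
have ab_r : a%:Z - b%:Z = r by rewrite /b; lia.
exists a, b; split; try lia.
apply: (admissible_cons (r := r)) => //.
- by rewrite -/m; lia.
- by rewrite dvdn_add // dvdn_mulr // dvdn_mulr.
- move=> x xB; have := y_prime (c0%:Z - x%:Z).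
  rewrite mem_cat (map_f (fun x => c0%:Z - x%:Z)) // => /(_ isT).
  by rewrite /a PoszD PoszM addrA.
- move=> x xA; have := y_prime (c0%:Z - r - x%:Z).
  rewrite mem_cat (map_f (fun x => c0%:Z - r - x%:Z)) ?orbT // => /(_ isT).
  by rewrite -abszN; congr (prime (absz _)); rewrite -ab_r /a PoszD PoszM; ring.
move=> q q_prime q_ge5; have [q_P | q_P] := boolP (q \in P).
  have [_ _ extend] := c0_P q q_P; apply: extend ab_r.
  by rewrite /a -modnDml (eqP (dvdn_mulr y (P_dvd_M q_P))) add0n.
apply: certificate_large; have := large_notin_P q_prime q_ge5 q_P.
by rewrite /k !size_cat /=; nia.
Qed.

End Extension.

Definition certificateb q A B (U V : seq nat) rp rm : bool :=
  let Up := fun c => c \in U in let Vp := fun c => c \in V in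
  [&& all (fun c => c \notin V) U,
      all (fun R => has (fun c => (c < q)%N && (((c + q - R) %% q)%N \in V)) U) (iota 1 q.-1),
      all (fun a => (a %% q)%N \notin V) A,
      all (fun b => (b %% q)%N \notin U) B &
      [&& represented A B q%:Z || reserved q A B Up Vp rp,
          represented A B (- q%:Z) || reserved q A B Up Vp rm &
          [|| represented A B q%:Z, represented A B (- q%:Z) | rp != rm]]].

Lemma certificateP q A B U V rp rm : certificateb q A B U V rp rm -> certificate q A B.
Proof.
case/and5P=> /allP disj /allP cover /allP A_out /allP B_out /and3P[rp_ok rm_ok rp_rm].
exists (fun c => c \in U), (fun c => c \in V), rp, rm; split => //.
move=> R R_range; have : R \in iota 1 q.-1 by rewrite mem_iota; lia.
by move/cover/hasP=> [c cU /andP[c_lt cV]]; exists c; rewrite ?cU.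
Qed.

(* For empty lists no certificate mod 5 exists: two reserved classes leave
   three residues for U and V, too few to cover the four nonzero residues. *)
Definition initial_A : seq nat := [:: 6]%N.
Definition initial_B : seq nat := [:: 1; 11]%N.

(* Certificates for the initial lists at the primes 5 <= q < 23, which are
   too small for [certificate_of_gap]. *)
Definition small_certificate_data (q : nat) : seq nat * seq nat * nat * nat :=
  match q with
  | 5 => ([:: 0; 2], [:: 3; 4], 0, 0)
  | 7 => ([:: 0; 5; 6], [:: 1; 4], 2, 3)
  | 11 => ([:: 2; 3], [:: 0; 1; 4; 5; 7; 9], 8, 10)
  | 13 => ([:: 0; 2], [:: 3; 4; 7; 8; 11; 12], 5, 9)
  | 17 => ([:: 0; 2], [:: 3; 4; 7; 8; 11; 12; 15; 16], 5, 9)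
  | 19 => ([:: 0; 2], [:: 1; 4; 5; 8; 9; 12; 13; 16; 17], 3, 7)
  | _ => ([::], [::], 0, 0)
  end%N.

Lemma small_certificates_ok :
  all (fun q => prime q ==>
         let: (U, V, rp, rm) := small_certificate_data q in
         certificateb q initial_A initial_B U V rp rm) (iota 5 18).
Proof. by vm_compute. Qed.

Lemma admissible_initial : admissible initial_A initial_B.
Proof.
split.
- by move=> a b; rewrite !inE => /eqP-> /orP[] /eqP->.
- by move=> a1 b1 a2 b2; rewrite !inE => /eqP-> _ /eqP-> _ diff_eq; split => //; lia.
- by move=> a; rewrite inE => /eqP->.
- by move=> b; rewrite !inE => /orP[] /eqP->.
move=> q q_prime q_ge5; have [q_small | q_large] := ltnP q 23.
  have q_in : q \in iota 5 18 by rewrite mem_iota; lia.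
  have := allP small_certificates_ok q q_in; rewrite q_prime /=.
  by case: (small_certificate_data q) => [[[U V] rp] rm] /certificateP.
apply: (@certificate_of_gap q 13 4) => //; try lia.
by move=> x; rewrite !inE => /or3P[] /eqP->; rewrite modn_small; lia.
Qed.

Lemma fresh_signed_prime A B : exists2 r, signed_prime_gt3 r & ~~ represented A B r.
Proof.
have [p p_big p_prime] := prime_above (\max_(a <- A) a + 3).
exists p%:Z; first by rewrite /signed_prime_gt3 absz_nat p_prime; lia.
apply/representedP=> -[a aA [b _ ab_p]].
have : (a <= \max_(a <- A) a)%N by exact: leq_bigmax_seq.
lia.
Qed.

Section Limit.

Hypothesis pth : prime_tuple_hypothesis.

(* [unpickle] enumerates all of [int]; the default 0 is not a signed prime. *)
Definition target (n : nat) : int := odflt 0 (unpickle n).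

Definition admissible_state : Type :=
  {AB : seq nat * seq nat | admissible AB.1 AB.2}.

Definition grows (n : nat) (AB AB' : seq nat * seq nat) : Prop :=
  exists a b : nat, [/\ AB' = (a :: AB.1, b :: AB.2), (n < a)%N, (n < b)%N &
    signed_prime_gt3 (target n) -> represented AB'.1 AB'.2 (target n)].

Lemma grow n (s : admissible_state) :
  exists s' : admissible_state, grows n (sval s) (sval s').
Proof.
case: s => -[A B] /= AB_adm.
have [r [r_prime r_new r_target]] :
    exists r, [/\ signed_prime_gt3 r, ~~ represented A B r &
    signed_prime_gt3 (target n) -> represented A B (target n) || (r == target n)].
  have [/andP[t_prime t_new] | t_old] :=
    boolP (signed_prime_gt3 (target n) && ~~ represented A B (target n)).
    by exists (target n); rewrite ?eqxx ?orbT.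
  have [r r_prime r_new] := fresh_signed_prime A B.
  by exists r; split => // t_prime; move: t_old; rewrite t_prime negbK => ->.
have [a [b [a_big b_big ab_r ab_adm]]] := admissible_extend pth AB_adm r_prime r_new n.
exists (exist _ (a :: A, b :: B) ab_adm), a, b; split => // t_prime.
case/orP: (r_target t_prime) => [/(represented_cons a b) // | /eqP <-].
by rewrite -ab_r represented_head.
Qed.

Fixpoint stage (n : nat) : admissible_state :=
  if n is m.+1 then proj1_sig (constructive_indefinite_description _ (grow m (stage m)))
  else exist _ (initial_A, initial_B) admissible_initial.

Lemma stage_grows n : grows n (sval (stage n)) (sval (stage n.+1)).
Proof. by rewrite /=; case: constructive_indefinite_description. Qed.

Definition stage_A n : seq nat := (sval (stage n)).1.
Definition stage_B n : seq nat := (sval (stage n)).2.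

Definition limit_A (a : nat) : Prop := exists n, a \in stage_A n.
Definition limit_B (b : nat) : Prop := exists n, b \in stage_B n.

Lemma stage_admissible n : admissible (stage_A n) (stage_B n).
Proof. exact: (svalP (stage n)). Qed.

Lemma stage_mono m n : (m <= n)%N ->
  {subset stage_A m <= stage_A n} /\ {subset stage_B m <= stage_B n}.
Proof.
elim: n => [|n IHn]; first by rewrite leqn0 => /eqP->; split=> x.
rewrite leq_eqVlt => /predU1P[-> | /IHn[subA subB]]; first by split=> x.
rewrite /stage_A /stage_B; have [a [b [-> _ _ _]]] := stage_grows n.
by split=> x /= x_in; rewrite inE (subA x, subB x) ?orbT.
Qed.

Lemma limit_stage a b a' b' : limit_A a -> limit_B b -> limit_A a' -> limit_B b' ->
  exists n, [/\ a \in stage_A n, b \in stage_B n, a' \in stage_A n & b' \in stage_B n].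
Proof.
move=> [i ai] [j bj] [i' a'i'] [j' b'j']; set n := maxn (maxn i j) (maxn i' j').
have mono k : k \in [:: i; j; i'; j'] ->
    {subset stage_A k <= stage_A n} /\ {subset stage_B k <= stage_B n}.
  by rewrite !inE => k_in; apply: stage_mono; move: k_in; rewrite /n => /or4P[] /eqP->; lia.
exists n; split; [apply: (proj1 (mono i _)) | apply: (proj2 (mono j _)) |
  apply: (proj1 (mono i' _)) | apply: (proj2 (mono j' _))]; by rewrite ?inE ?eqxx ?orbT.
Qed.

Lemma limit_A_gt0 a : limit_A a -> (0 < a)%N.
Proof. by case=> n; have [_ _ A_pos _ _] := stage_admissible n => /A_pos /andP[]. Qed.

Lemma limit_B_gt0 b : limit_B b -> (0 < b)%N.
Proof. by case=> n; have [_ _ _ B_pos _] := stage_admissible n => /B_pos /and3P[]. Qed.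

Lemma limit_unbounded N : exists a b, [/\ (N < a)%N, (N < b)%N, limit_A a & limit_B b].
Proof.
have [a [b [S_N a_big b_big _]]] := stage_grows N.
by exists a, b; split=> //; exists N.+1; rewrite /stage_A /stage_B S_N mem_head.
Qed.

Lemma limit_diff_prime a b : limit_A a -> limit_B b -> signed_prime_gt3 (a%:Z - b%:Z).
Proof.
move=> a_lim b_lim; have [n [aA bB _ _]] := limit_stage a_lim b_lim a_lim b_lim.
by have [diff_prime _ _ _ _] := stage_admissible n; apply: diff_prime.
Qed.

Lemma limit_represented r :
  signed_prime_gt3 r -> exists a b, [/\ limit_A a, limit_B b & a%:Z - b%:Z = r].
Proof.
move=> r_prime; have [a [b [_ _ _]]] := stage_grows (pickle r).
rewrite /target pickleK /= => /(_ r_prime) /representedP[a' a'A [b' b'B ab_r]].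
by exists a', b'; split=> //; exists (pickle r).+1.
Qed.

Lemma limit_unique a b a' b' : limit_A a -> limit_B b -> limit_A a' -> limit_B b' ->
  a%:Z - b%:Z = a'%:Z - b'%:Z -> a = a' /\ b = b'.
Proof.
move=> a_lim b_lim a'_lim b'_lim.
have [n [aA bB a'A b'B]] := limit_stage a_lim b_lim a'_lim b'_lim.
by have [_ AB_uniq _ _ _] := stage_admissible n; apply: AB_uniq.
Qed.

End Limit.

Theorem theorem2 :
  prime_tuple_hypothesis ->
  exists A B : nat -> Prop,
    (forall a, A a -> (0 < a)%N) /\
    (forall b, B b -> (0 < b)%N) /\
    (forall N : nat, exists a, (N < a)%N /\ A a) /\
    (forall N : nat, exists b, (N < b)%N /\ B b) /\
    (forall a b, A a -> B b -> signed_prime_gt3 (a%:Z - b%:Z)) /\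
    (forall r : int, signed_prime_gt3 r ->
       exists! ab : nat * nat, A ab.1 /\ B ab.2 /\ r = ab.1%:Z - ab.2%:Z).
Proof.
move=> pth; exists (limit_A pth), (limit_B pth).
split; [|split; [|split; [|split; [|split]]]].
- exact: limit_A_gt0.
- exact: limit_B_gt0.
- by move=> N; have [a [b [a_big _ a_lim _]]] := limit_unbounded pth N; exists a.
- by move=> N; have [a [b [_ b_big _ b_lim]]] := limit_unbounded pth N; exists b.
- exact: limit_diff_prime.
move=> r r_prime; have [a [b [a_lim b_lim ab_r]]] := limit_represented pth r_prime.
exists (a, b); split=> // -[a' b'] [a'_lim [b'_lim r_ab]] /=.
by have [-> ->] := limit_unique a_lim b_lim a'_lim b'_lim (etrans ab_r r_ab).
Qed.
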